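(* Let $S$ be a finite semigroup. If every direct power $\Pi\mathrm{Pr}(S)=\prod_{i\in I}\mathrm{Pr}(S)$ is $\mathcal{L}_{s\text{-}pred}(\Pi S)$-equationally Noetherian, then $\mathrm{Ker}(S)=\mathrm{Red}(S)$ and $\mathrm{Ker}(S)$ is a rectangular band of groups.
   Context: $\mathcal{L}_{s\text{-}pred}=\{M\}$ with $M$ ternary; $\mathrm{Pr}(S)$ is the structure on $S$ with $M(x,y,z)\Leftrightarrow xy=z$. The direct power consists of sequences $[a_i\mid i\in I]$ with $M$ holding coordinatewise; $\mathcal{L}_{s\text{-}pred}(\Pi S)$ adds a constant symbol for every element of the power. Equations are atomic formulas ($M(t_1,t_2,t_3)$ or $t_1=t_2$, each $t_k$ a variable or constant); systems are sets of equations in a fixed finite set of variables; a structure is equationally Noetherian (in this language) if every system is equivalent (same solution set) to a finite subsystem. $\mathrm{Ker}(S)$ is the minimal two-sided ideal of $S$; $\mathrm{Red}(S)=\{ab\mid a,b\in S\}$ is the set of reducible elements. A semigroup is a rectangular band of groups if it is isomorphic to the set of triples $(\lambda,g,i)$, $\lambda\in\Lambda$, $g\in G$, $i\in I$ (for a finite group $G$ and finite sets $\Lambda,I$) with multiplication $(\lambda,g,i)(\mu,h,j)=(\lambda,gh,j)$. *)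

From mathcomp Require Import all_boot all_fingroup.
From Stdlib Require Import List.
Set Implicit Arguments. Unset Strict Implicit. Unset Printing Implicit Defensive.

Inductive term (n : nat) (A : Type) : Type :=
| TVar of 'I_n
| TConst of A.

Inductive equation (n : nat) (A : Type) : Type :=
| EqM of term n A & term n A & term n A
| EqE of term n A & term n A.

Definition eval_term n A (v : 'I_n -> A) (t : term n A) : A :=
  match t with TVar i => v i | TConst a => a end.

Definition sat_eq n A (M : A -> A -> A -> Prop) (v : 'I_n -> A)
    (e : equation n A) : Prop :=
  match e with
  | EqM t1 t2 t3 => M (eval_term v t1) (eval_term v t2) (eval_term v t3)
  | EqE t1 t2 => eval_term v t1 = eval_term v t2
  end.

Definition eq_noetherian (A : Type) (M : A -> A -> A -> Prop) : Prop :=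
  forall (n : nat) (Sys : equation n A -> Prop),
    exists l : list (equation n A),
      (forall e, In e l -> Sys e) /\
      (forall v : 'I_n -> A,
          (forall e, Sys e -> sat_eq M v e) <-> (forall e, In e l -> sat_eq M v e)).

Definition PrM (T : Type) (mul : T -> T -> T) (x y z : T) : Prop := mul x y = z.

Definition powM (I T : Type) (mul : T -> T -> T) (x y z : I -> T) : Prop :=
  forall i, PrM mul (x i) (y i) (z i).

Definition is_ideal (T : finType) (mul : T -> T -> T) (K : {set T}) : Prop :=
  K != set0 /\ (forall s k, k \in K -> mul s k \in K /\ mul k s \in K).

Definition is_minimal_ideal (T : finType) (mul : T -> T -> T) (K : {set T}) :=
  is_ideal mul K /\ (forall J, is_ideal mul J -> J \subset K -> J = K).

Definition Red (T : finType) (mul : T -> T -> T) : {set T} :=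
  [set x | [exists a, exists b, mul a b == x]].

Definition rect_band_of_groups (T : finType) (mul : T -> T -> T) (K : {set T})
  : Prop :=
  exists (Lam Idx : finType) (gT : finGroupType)
         (f : Lam * gT * Idx -> T),
    injective f /\
    (forall x, x \in K <-> exists p, f p = x) /\
    (forall l g i m h j,
        mul (f (l, g, i)) (f (m, h, j)) = f (l, (g * h)%g, j)).

(** Noetherianity of the power [Pr(S)^N] forces left translations of [S] that
    agree at one point to agree everywhere: otherwise the infinitely many
    equations [M(c_j, x, y)], with [c_j] equal to [a] at coordinate [j] and to
    [b] elsewhere, have no equivalent finite subsystem.  Hence for an idempotent
    [e] of the kernel [ab = aeb] for all [a, b], so [Red(S) = SeS = Ker(S)].
    The same rigidity shows that [e] is the only idempotent of [eSe], which is
    therefore a group [G]; and [x |-> (x h, exe, h x)] with [h = (exe)^-1]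
    identifies [SeS] with [L * G * R], where [L = {l | le = l, el = e}] and
    [R = {r | er = r, re = e}]. *)

From HB Require Import structures.
From mathcomp Require Import all_boot all_fingroup zify.
From Stdlib Require Import List.
Set Implicit Arguments. Unset Strict Implicit. Unset Printing Implicit Defensive.

Definition left_mul_rigid (T : Type) (mul : T -> T -> T) : Prop :=
  forall a b x0 x, mul a x0 = mul b x0 -> mul a x = mul b x.

Lemma bound_witnesses (A : Type) (P : nat -> A -> Prop) (l : list A) :
  (forall a, In a l -> exists j, P j a) ->
  exists N, forall a, In a l -> exists2 j, j < N & P j a.
Proof.
elim: l => [|a l IHl] wit; first by exists 0.
have [N ltN] := IHl (fun b lb => wit b (or_intror lb)).
have [j Pja] := wit a (or_introl erefl).
exists (maxn N j).+1 => b [<-|lb]; first by exists j; rewrite // ltnS leq_maxr.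
have [j' ltj' Pj'b] := ltN b lb; exists j' => //.
by rewrite ltnS (leq_trans (ltnW ltj')) ?leq_maxl.
Qed.

Lemma noetherian_power_left_mul_rigid (T : Type) (mul : T -> T -> T) :
  eq_noetherian (@powM nat T mul) -> left_mul_rigid mul.
Proof.
move=> noeth a b x0 x eq_x0.
pose c j : nat -> T := fun i => if i == j then a else b.
pose eq_c j : equation 2 (nat -> T) :=
  EqM (TConst 2 (c j)) (TVar _ ord0) (TVar _ ord_max).
have [l [l_sys l_equiv]] := noeth 2 (fun eqn => exists j, eqn = eq_c j).
have [N ltN] := bound_witnesses l_sys.
(* Off coordinate [N] this solves [M(c_j, x, y)] for every [j], and at [N] for
   every [j <> N]; so it satisfies the finite subsystem, and [M(c_N, x, y)]
   at [N] reads [a x = b x]. *)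
pose xs i := if i == N then x else x0.
pose ys i := if i == N then mul b x else mul a x0.
pose v (k : 'I_2) := if k == ord0 then xs else ys.
have sat_l : forall eqn, In eqn l -> sat_eq (@powM nat T mul) v eqn.
  move=> _ /ltN [j ltjN ->] i; rewrite /PrM /v /= /c /xs /ys.
  case: eqVneq => [->|_]; first by rewrite ltn_eqF.
  by case: (i == N); rewrite ?eq_x0.
have := proj2 (l_equiv v) sat_l (eq_c N) (ex_intro _ N erefl) N.
by rewrite /PrM /v /= /c /xs /ys eqxx.
Qed.

Section Powers.

Variables (T : Type) (mul : T -> T -> T).
Hypothesis mulA : associative mul.

(** [spow k n] is the power [k^(n+1)]. *)
Definition spow (k : T) (n : nat) : T := iter n (mul k) k.

Lemma spowD k a b : mul (spow k a) (spow k b) = spow k (a + b).+1.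
Proof. by elim: a => //= a IHa; rewrite -mulA IHa. Qed.

Lemma spow_shift k a b c : spow k a = spow k b -> spow k (a + c) = spow k (b + c).
Proof.
case: c => [|c] eq_ab; first by rewrite !addn0.
by rewrite ![_ + c.+1]addnC !addSn -!spowD eq_ab.
Qed.

Lemma spow_period k i p :
  spow k i = spow k (i + p) -> forall q, spow k i = spow k (i + q * p).
Proof.
move=> eq_p; elim=> [|q IHq]; first by rewrite addn0.
by rewrite mulSn addnA -(spow_shift _ eq_p) IHq.
Qed.

End Powers.

Lemma spow_collision (T : finType) (mul : T -> T -> T) (k : T) :
  exists i p, 0 < p /\ spow mul k i = spow mul k (i + p).
Proof.
pose f (i : 'I_#|T|.+1) := spow mul k i.
have /injectivePn [i [j neq_ij eq_ij]] : ~~ injectiveb f.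
  by apply/injectiveP => /leq_card; rewrite card_ord ltnn.
have [lt_ij|lt_ji|/val_inj eq_ij'] := ltngtP i j.
- by exists i, (j - i); rewrite subn_gt0 subnKC ?(ltnW lt_ij).
- by exists j, (i - j); rewrite subn_gt0 subnKC ?(ltnW lt_ji).
- by rewrite eq_ij' eqxx in neq_ij.
Qed.

Lemma spow_idem (T : finType) (mul : T -> T -> T) (mulA : associative mul) k :
  exists n, mul (spow mul k n) (spow mul k n) = spow mul k n.
Proof.
have [i [p [p_gt0 eq_p]]] := spow_collision mul k.
(* [n = (i+1)p - 1] is at least [i], and [2n + 1 = n + (i+1)p]. *)
have := spow_period mulA eq_p i.+1.
have : i.+1 <= i.+1 * p by rewrite leq_pmulr.
move: (i.+1 * p) => u le_u /(spow_shift mulA (u.-1 - i)) eq_u.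
exists u.-1; rewrite spowD //.
have -> : (u.-1 + u.-1).+1 = i + u + (u.-1 - i) by lia.
by rewrite -eq_u; congr spow; lia.
Qed.

Section Ideals.

Variables (T : finType) (mul : T -> T -> T).
Hypothesis mulA : associative mul.

Lemma ideal_spow K k n : is_ideal mul K -> k \in K -> spow mul k n \in K.
Proof. by move=> [_ K_ideal] kK; elim: n => //= n IHn; case: (K_ideal k _ IHn). Qed.

Variable e : T.
Hypothesis ee : mul e e = e.

Definition SeS : {set T} := [set x | [exists s, exists t, mul s (mul e t) == x]].

Lemma SeSP x : reflect (exists s t, mul s (mul e t) = x) (x \in SeS).
Proof.
rewrite inE; apply: (iffP existsP) => [[s /existsP [t /eqP]]|[s [t st]]].
  by exists s, t.
by exists s; apply/existsP; exists t; apply/eqP.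
Qed.

Lemma SeS_ideal : is_ideal mul SeS.
Proof.
split; first by apply/set0Pn; exists e; apply/SeSP; exists e, e; rewrite !ee.
move=> u _ /SeSP [s [t <-]]; split; apply/SeSP.
  by exists (mul u s), t; rewrite !mulA.
by exists s, (mul t u); rewrite !mulA.
Qed.

Lemma SeS_sub_ideal K : is_ideal mul K -> e \in K -> SeS \subset K.
Proof.
move=> [_ K_ideal] eK; apply/subsetP => _ /SeSP [s [t <-]].
by case: (K_ideal s _ (K_ideal t _ eK).2).
Qed.

End Ideals.

Section RigidSemigroup.

Variables (T : finType) (mul : T -> T -> T).
Hypothesis mulA : associative mul.
Hypothesis rigid : left_mul_rigid mul.

Variable e : T.
Hypothesis ee : mul e e = e.

Lemma mul_idem_absorb a x : mul a (mul e x) = mul a x.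
Proof. by rewrite mulA; apply: (rigid (x0 := e)); rewrite -mulA ee. Qed.

Lemma idem_eq f : mul f f = f -> mul e f = f -> mul f e = f -> f = e.
Proof. by move=> ff ef fe; rewrite -fe (rigid (b := e) (x0 := f)) ?ff ?ef. Qed.

Lemma Red_SeS : Red mul = SeS mul e.
Proof.
apply/setP => x; rewrite inE; apply/existsP/SeSP => [[a /existsP [b /eqP <-]]|].
  by exists a, b; rewrite mul_idem_absorb.
by case=> s [t <-]; exists s; apply/existsP; exists (mul e t).
Qed.

Definition corner := {x : T | mul e (mul x e) == x}.
HB.instance Definition _ := Finite.on corner.

Lemma to_corner_subproof x : mul e (mul (mul e (mul x e)) e) == mul e (mul x e).
Proof. by rewrite !mulA ee -!mulA ee. Qed.

Definition to_corner (x : T) : corner :=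
  @exist _ (fun y => mul e (mul y e) == y) _ (to_corner_subproof x).

Lemma idem_mul_corner (g : corner) : mul e (val g) = val g.
Proof. by case: g => g /= /eqP gP; rewrite -gP mulA ee. Qed.

Lemma corner_mul_idem (g : corner) : mul (val g) e = val g.
Proof. by case: g => g /= /eqP gP; rewrite -gP -!mulA ee. Qed.

Lemma to_corner_val g : to_corner (val g) = g.
Proof. by apply: val_inj; rewrite /= corner_mul_idem idem_mul_corner. Qed.

Definition corner_one : corner := to_corner e.
Definition corner_mul (g h : corner) : corner := to_corner (mul (val g) (val h)).
Definition corner_inv (g : corner) : corner :=
  odflt corner_one [pick h | corner_mul h g == corner_one].

Lemma val_corner_one : val corner_one = e.
Proof. by rewrite /= !ee. Qed.

Lemma val_corner_mul g h : val (corner_mul g h) = mul (val g) (val h).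
Proof. by rewrite /= !mulA idem_mul_corner -mulA corner_mul_idem. Qed.

Lemma corner_mulA : associative corner_mul.
Proof. by move=> g h k; apply: val_inj; rewrite !val_corner_mul mulA. Qed.

Lemma corner_mul1 : left_id corner_one corner_mul.
Proof. by move=> g; apply: val_inj; rewrite val_corner_mul val_corner_one idem_mul_corner. Qed.

(** An idempotent power [g^(n+1)] of [g] lies in [eSe], hence is [e], so
    [g^(2n+1)] is a left inverse of [g]. *)
Lemma corner_inv_ex g : exists h, corner_mul h g = corner_one.
Proof.
have [n idem] := spow_idem corner_mulA g.
have one : spow corner_mul g n = corner_one.
  apply: val_inj; rewrite val_corner_one; apply: idem_eq.
  - by rewrite -val_corner_mul idem.
  - exact: idem_mul_corner.
  - exact: corner_mul_idem.
have powD := spowD corner_mulA g.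
exists (spow corner_mul g (n + n)).
by rewrite -[g in corner_mul _ g]/(spow corner_mul g 0) powD addn0 -powD idem one.
Qed.

Lemma corner_mulV : left_inverse corner_one corner_inv corner_mul.
Proof.
move=> g; rewrite /corner_inv; case: pickP => [h /eqP //|no_inv].
by have [h /eqP] := corner_inv_ex g; rewrite no_inv.
Qed.

HB.instance Definition _ :=
  Finite_isGroup.Build corner corner_mulA corner_mul1 corner_mulV.

Lemma val_cornerM (g h : corner) : val (g * h)%g = mul (val g) (val h).
Proof. exact: val_corner_mul. Qed.

Lemma val_corner1 : val (1 : corner)%g = e.
Proof. exact: val_corner_one. Qed.

Lemma to_cornerM x y : to_corner (mul x y) = (to_corner x * to_corner y)%g.
Proof.
apply: val_inj; rewrite val_cornerM /= mul_idem_absorb.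
by rewrite -!mulA mul_idem_absorb.
Qed.

Lemma to_corner_idem : to_corner e = 1%g.
Proof. by []. Qed.

Definition lidx := {l : T | (mul l e == l) && (mul e l == e)}.
Definition ridx := {r : T | (mul e r == r) && (mul r e == e)}.
HB.instance Definition _ := Finite.on lidx.
HB.instance Definition _ := Finite.on ridx.

Lemma lidx_mul_idem (l : lidx) : mul (val l) e = val l.
Proof. by case: l => l /= /andP [/eqP]. Qed.

Lemma idem_mul_lidx (l : lidx) : mul e (val l) = e.
Proof. by case: l => l /= /andP [_ /eqP]. Qed.

Lemma idem_mul_ridx (r : ridx) : mul e (val r) = val r.
Proof. by case: r => r /= /andP [/eqP]. Qed.

Lemma ridx_mul_idem (r : ridx) : mul (val r) e = e.
Proof. by case: r => r /= /andP [_ /eqP]. Qed.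

Lemma corner_mul_lidx (g : corner) (l : lidx) : mul (val g) (val l) = val g.
Proof. by rewrite -corner_mul_idem -mulA idem_mul_lidx. Qed.

Lemma ridx_mul_corner (r : ridx) (g : corner) : mul (val r) (val g) = val g.
Proof. by rewrite -idem_mul_corner mulA ridx_mul_idem. Qed.

Lemma ridx_mul_lidx (r : ridx) (l : lidx) : mul (val r) (val l) = e.
Proof. by rewrite -mul_idem_absorb idem_mul_lidx ridx_mul_idem. Qed.

Definition rbg (p : lidx * corner * ridx) : T :=
  let: (l, g, r) := p in mul (val l) (mul (val g) (val r)).

Lemma rbgE l g r : rbg (l, g, r) = mul (val l) (mul (val g) (val r)).
Proof. by []. Qed.

Lemma rbgM l g r l' g' r' :
  mul (rbg (l, g, r)) (rbg (l', g', r')) = rbg (l, (g * g')%g, r').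
Proof.
rewrite !rbgE val_cornerM -!mulA; congr (mul _ _).
by rewrite (mulA (val r)) ridx_mul_lidx mul_idem_absorb.
Qed.

Lemma to_corner_rbg l g r : to_corner (rbg (l, g, r)) = g.
Proof.
apply: val_inj; rewrite rbgE /= !mulA idem_mul_lidx idem_mul_corner.
by rewrite -!mulA ridx_mul_idem corner_mul_idem.
Qed.

Lemma mul_to_corner x (g : corner) :
  mul (val (to_corner x)) (val g) = mul e (mul x (val g)).
Proof. by rewrite /= -!mulA idem_mul_corner. Qed.

Lemma corner_mul_to_corner x (g : corner) :
  mul (val g) (val (to_corner x)) = mul (mul (val g) x) e.
Proof. by rewrite /= !mulA corner_mul_idem. Qed.

Definition lpart (x : T) : T := mul x (val (to_corner x)^-1%g).
Definition rpart (x : T) : T := mul (val (to_corner x)^-1%g) x.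

Lemma lpart_subproof x : (mul (lpart x) e == lpart x) && (mul e (lpart x) == e).
Proof.
rewrite /lpart -mulA corner_mul_idem eqxx /=.
by rewrite -mul_to_corner -val_cornerM mulgV val_corner1.
Qed.

Lemma rpart_subproof x : (mul e (rpart x) == rpart x) && (mul (rpart x) e == e).
Proof.
rewrite /rpart mulA idem_mul_corner eqxx /=.
by rewrite -corner_mul_to_corner -val_cornerM mulVg val_corner1.
Qed.

Definition to_lidx x : lidx := Sub (lpart x) (lpart_subproof x).
Definition to_ridx x : ridx := Sub (rpart x) (rpart_subproof x).

Lemma lpart_rbg l g r : lpart (rbg (l, g, r)) = val l.
Proof.
rewrite /lpart to_corner_rbg rbgE -!mulA ridx_mul_corner -val_cornerM mulgV.
by rewrite val_corner1 lidx_mul_idem.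
Qed.

Lemma rpart_rbg l g r : rpart (rbg (l, g, r)) = val r.
Proof.
rewrite /rpart to_corner_rbg rbgE !mulA corner_mul_lidx -val_cornerM mulVg.
by rewrite val_corner1 idem_mul_ridx.
Qed.

Lemma rbg_inj : injective rbg.
Proof.
move=> [[l g] r] [[l' g'] r'] eq_rbg.
have <- : g = g' by rewrite -(to_corner_rbg l g r) eq_rbg to_corner_rbg.
have <- : l = l' by apply: val_inj; rewrite -(lpart_rbg l g r) eq_rbg lpart_rbg.
have <- : r = r' by apply: val_inj; rewrite -(rpart_rbg l g r) eq_rbg rpart_rbg.
by [].
Qed.

Lemma rbg_SeS p : rbg p \in SeS mul e.
Proof.
case: p => [[l g] r]; apply/SeSP; exists (val l), (mul (val g) (val r)).
by rewrite rbgE (mulA e) idem_mul_corner.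
Qed.

(** With [x = s e t] and [g = to_corner x = (ese)(ete)], the middle factor
    [e (t g^-1 s) e] of [x g^-1 x] is [(ete) g^-1 (ese) = 1]. *)
Lemma SeS_regular x :
  x \in SeS mul e -> mul x (mul (val (to_corner x)^-1%g) x) = x.
Proof.
move=> /SeSP [s [t <-]].
rewrite to_cornerM to_cornerM to_corner_idem mul1g.
set h := ((to_corner s * to_corner t)^-1)%g.
have middle : mul e (mul (mul t (mul (val h) s)) e) = e.
  rewrite -[LHS]/(val (to_corner _)) !to_cornerM to_corner_val.
  by rewrite /h invMg !mulgA mulgV mul1g mulVg val_corner1.
transitivity (mul s (mul (mul e (mul (mul t (mul (val h) s)) e)) t)).
  by rewrite !mulA.
by rewrite middle.
Qed.

Lemma SeS_rbg x : x \in SeS mul e -> exists p, rbg p = x.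
Proof.
move=> xSeS.
exists (to_lidx x, to_corner x, to_ridx x).
rewrite rbgE -[val (to_lidx x)]/(lpart x) -[val (to_ridx x)]/(rpart x).
rewrite /lpart /rpart -(mulA x) (mulA (val (to_corner x)^-1%g) (val (to_corner x))).
by rewrite -val_cornerM mulVg val_corner1 mul_idem_absorb SeS_regular.
Qed.

Lemma SeS_rect_band : rect_band_of_groups mul (SeS mul e).
Proof.
exists lidx, ridx, corner, rbg; split; first exact: rbg_inj.
split; last exact: rbgM.
by move=> x; split; [exact: SeS_rbg | case=> p <-; exact: rbg_SeS].
Qed.

End RigidSemigroup.

Theorem theorem4 (T : finType) (mul : T -> T -> T)
    (mulA : associative mul) :
  (forall I : Type, eq_noetherian (@powM I T mul)) ->
  forall K : {set T}, is_minimal_ideal mul K ->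
    K = Red mul /\ rect_band_of_groups mul K.
Proof.
move=> noeth K [K_ideal K_min].
have rigid := noetherian_power_left_mul_rigid (noeth nat).
have [k kK] := set0Pn K K_ideal.1.
have [n ee] := spow_idem mulA k.
set e := spow mul k n in ee.
have eK : e \in K by exact: ideal_spow.
have K_SeS : K = SeS mul e.
  by apply/esym/K_min; [exact: SeS_ideal | exact: SeS_sub_ideal].
by rewrite K_SeS (Red_SeS mulA rigid ee); split; last exact: SeS_rect_band.
Qed.
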